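(* Let $n\in\mathbb{N}=\{1,2,\dots\}$, $0\le i\le n-1$, and let $t_1<\dots<t_n$ be the zeros of $H_n$. (i) If $i$ is even, then $$\int_{-\infty}^\infty\frac{t^i}{i!}|h_n(t)|\,dt=\frac{1}{n!}\sum_{m=1}^n(-1)^{m+n}\sum_{k=0}^i\frac{(n-1-k)!}{2^k(i-k)!}t_m^{i-k}h_{n-1-k}(t_m).$$ (ii) If $i$ is odd and $n$ is even, then $$\int_{-\infty}^\infty\frac{|t|^i}{i!}|h_n(t)|\,dt=\frac{1}{n!}\sum_{m=1}^{n/2}(-1)^{m+1}\sum_{k=0}^i\frac{(n-1-k)!}{2^k(i-k)!}t_m^{i-k}h_{n-1-k}(t_m)+\frac{(-1)^{n/2}(n-1-i)!}{n!\,2^i}h_{n-1-i}(0)+\frac{1}{n!}\sum_{m=\frac n2+1}^{n}(-1)^{m}\sum_{k=0}^i\frac{(n-1-k)!}{2^k(i-k)!}t_m^{i-k}h_{n-1-k}(t_m);$$ and if $i$ is odd and $n$ is odd, then $$\int_{-\infty}^\infty\frac{|t|^i}{i!}|h_n(t)|\,dt=\frac{1}{n!}\sum_{m=1}^{\frac{n-1}{2}}(-1)^{m}\sum_{k=0}^i\frac{(n-1-k)!}{2^k(i-k)!}t_m^{i-k}h_{n-1-k}(t_m)+\frac{1}{n!}\sum_{m=\frac{n+3}{2}}^{n}(-1)^{m+1}\sum_{k=0}^i\frac{(n-1-k)!}{2^k(i-k)!}t_m^{i-k}h_{n-1-k}(t_m).$$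
   Context: $H_n$ denotes the $n$-th Hermite polynomial ($H_n(t)=(-1)^ne^{t^2}\frac{d^n}{dt^n}e^{-t^2}$, so $H_0=1$, $H_1(t)=2t$), and the Hermite functions are $h_n(t)=\frac{1}{2^nn!\sqrt{\pi}}e^{-t^2}H_n(t)$, $t\in\mathbb{R}$. The zeros of $H_n$ are real, simple and symmetric about $0$. *)

From Stdlib Require Import Reals Arith Factorial.
From Coquelicot Require Import Coquelicot.
Open Scope R_scope.

Definition hermite (n : nat) (t : R) : R :=
  (-1) ^ n * exp (t ^ 2) * Derive_n (fun x => exp (- (x ^ 2))) n t.

Definition hermite_fun (n : nat) (t : R) : R :=
  / (2 ^ n * INR (fact n) * sqrt PI) * exp (- (t ^ 2)) * hermite n t.

Definition inner_sum (n i : nat) (x : R) : R :=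
  sum_n_m (fun k => INR (fact (n - 1 - k)) / (2 ^ k * INR (fact (i - k)))
                     * x ^ (i - k) * hermite_fun (n - 1 - k) x) 0 i.

Definition is_integral_R (f : R -> R) (v : R) : Prop :=
  is_RInt_gen f (Rbar_locally m_infty) (Rbar_locally p_infty) v.

(* The three-term recurrence gives d/dx S(n,i,x) = -2 n!/i! x^i h_n(x) for the inner sum S, so
   -S(n,i,.)/(2 n!) is an antiderivative of x^i h_n(x)/i! that vanishes at +-oo.  Between
   consecutive zeros t_m < t_(m+1) the sign of H_n is (-1)^(m+n): it is positive beyond the last
   zero and changes at every zero, all zeros being simple.  Hence the integrand is, on each
   interval between consecutive sign changes, an alternating multiple of x^i h_n(x)/i!, and the
   integral telescopes into an alternating sum of values of S at the sign changes.  For odd i the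
   factor sgn x adds or cancels a sign change at 0: the zeros are symmetric, so 0 lies strictly
   between t_(n/2) and t_(n/2+1) when n is even and equals t_((n+1)/2) when n is odd. *)

From Stdlib Require Import Reals Arith Lia Lra.
From Coquelicot Require Import Coquelicot.
Open Scope R_scope.

Ltac unfold_R_ops :=
  repeat change (plus ?u ?v) with (u + v);
  repeat change (mult ?u ?v) with (u * v);
  repeat change (@zero R_AbelianMonoid) with 0;
  repeat change (@one R_AbsRing) with 1;
  try match goal with |- ?a = ?b => change (@eq R a b) end.

Lemma is_derive_eq (f : R -> R) (x l l' : R) : is_derive f x l -> l = l' -> is_derive f x l'.
Proof. now intros H <-. Qed.

Lemma is_derive_Rmult (f g : R -> R) x df dg :
  is_derive f x df -> is_derive g x dg ->
  is_derive (fun y => f y * g y) x (df * g x + f x * dg).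
Proof. intros Hf Hg. apply (is_derive_mult f g x df dg Hf Hg), Rmult_comm. Qed.

Lemma is_derive_Rplus (f g : R -> R) x df dg :
  is_derive f x df -> is_derive g x dg -> is_derive (fun y => f y + g y) x (df + dg).
Proof. intros Hf Hg. apply (is_derive_plus f g x df dg Hf Hg). Qed.

Lemma is_derive_Rminus (f g : R -> R) x df dg :
  is_derive f x df -> is_derive g x dg -> is_derive (fun y => f y - g y) x (df - dg).
Proof. intros Hf Hg. apply (is_derive_minus f g x df dg Hf Hg). Qed.

Lemma is_derive_Rpow_id (n : nat) (x : R) : is_derive (fun y => y ^ n) x (INR n * x ^ (n - 1)).
Proof.
  eapply is_derive_eq; [apply is_derive_pow, (@is_derive_id R_AbsRing)|].
  replace (Init.Nat.pred n) with (n - 1)%nat by lia. unfold_R_ops. ring.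
Qed.

Lemma is_derive_gaussian x : is_derive (fun y => exp (- (y ^ 2))) x (-2 * x * exp (- (x ^ 2))).
Proof. auto_derive; [auto|]. replace (- (x * (x * 1))) with (- x ^ 2) by ring. ring. Qed.

Lemma INR_fact_pos k : 0 < INR (fact k).
Proof. apply lt_0_INR, lt_O_fact. Qed.

Lemma pow_m1_S k : (-1) ^ S k = - (-1) ^ k.
Proof. simpl; ring. Qed.

Fixpoint hermite_poly (n : nat) (t : R) : R :=
  match n with
  | O => 1
  | S O => 2 * t
  | S ((S k) as k1) => 2 * t * hermite_poly k1 t - 2 * INR k1 * hermite_poly k t
  end.

Lemma hermite_poly_SS k t :
  hermite_poly (S (S k)) t = 2 * t * hermite_poly (S k) t - 2 * INR (S k) * hermite_poly k t.
Proof. reflexivity. Qed.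

Lemma hermite_poly_S k t :
  hermite_poly (S k) t = 2 * t * hermite_poly k t - 2 * INR k * hermite_poly (k - 1) t.
Proof.
  destruct k as [|k]; [simpl; ring|].
  now replace (S k - 1)%nat with k by lia.
Qed.

Lemma is_derive_hermite_poly k x :
  is_derive (hermite_poly k) x (2 * INR k * hermite_poly (k - 1) x).
Proof.
  revert x; induction k as [k IH] using lt_wf_ind; intro x.
  destruct k as [|[|k]].
  - eapply is_derive_eq; [apply (@is_derive_const R_AbsRing R_NormedModule)|].
    change (@zero R_NormedModule) with 0. simpl; ring.
  - apply (is_derive_ext (fun y => 2 * y)); [reflexivity|].
    eapply is_derive_eq; [apply is_derive_scal, (@is_derive_id R_AbsRing)|].
    unfold_R_ops. simpl; ring.
  - apply (is_derive_ext (fun y => 2 * y * hermite_poly (S k) y - 2 * INR (S k) * hermite_poly k y));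
      [reflexivity|].
    eapply is_derive_eq.
    + apply is_derive_Rminus.
      * apply is_derive_Rmult; [apply is_derive_scal, (@is_derive_id R_AbsRing)|apply IH; lia].
      * apply is_derive_scal, IH; lia.
    + replace (S (S k) - 1)%nat with (S k) by lia. replace (S k - 1)%nat with k by lia.
      rewrite (hermite_poly_S k x), !S_INR. unfold_R_ops. ring.
Qed.

Lemma Derive_n_gaussian k t :
  Derive_n (fun x => exp (- (x ^ 2))) k t = (-1) ^ k * hermite_poly k t * exp (- (t ^ 2)).
Proof.
  revert t; induction k as [|k IH]; intro t; [simpl; ring|].
  simpl Derive_n. rewrite (Derive_ext _ _ _ IH).
  apply is_derive_unique. eapply is_derive_eq.
  - apply is_derive_Rmult; [apply is_derive_scal, is_derive_hermite_poly|apply is_derive_gaussian].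
  - rewrite (hermite_poly_S k t). simpl. ring.
Qed.

Lemma hermite_eq_poly k t : hermite k t = hermite_poly k t.
Proof.
  unfold hermite. rewrite Derive_n_gaussian.
  replace ((-1) ^ k * exp (t ^ 2) * ((-1) ^ k * hermite_poly k t * exp (- t ^ 2)))
    with (((-1) * (-1)) ^ k * (exp (t ^ 2) * exp (- t ^ 2)) * hermite_poly k t)
    by (rewrite Rpow_mult_distr; ring).
  rewrite <- exp_plus, Rplus_opp_r, exp_0. replace ((-1) * (-1)) with 1 by ring.
  rewrite pow1. ring.
Qed.

Lemma hermite_poly_opp k x : hermite_poly k (- x) = (-1) ^ k * hermite_poly k x.
Proof.
  induction k as [k IH] using lt_wf_ind.
  destruct k as [|[|k]]; [simpl; ring..|].
  rewrite !hermite_poly_SS, !IH by lia. simpl; ring.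
Qed.

Lemma hermite_poly_large k x :
  INR k + 1 <= x -> 0 < hermite_poly k x /\ x * hermite_poly k x <= hermite_poly (S k) x.
Proof.
  revert x; induction k as [|k IH]; intros x Hx; [simpl in *; lra|].
  rewrite S_INR in Hx. destruct (IH x ltac:(lra)) as [Hpos Hgrow].
  assert (Hk : 0 <= INR k) by apply pos_INR.
  split; [nra|].
  rewrite hermite_poly_SS, S_INR.
  (* [x^2 >= 2 (k + 1)], and [x H_k <= H_{k+1}] bounds the subtracted term by [x H_{k+1}] *)
  assert (Hsq : 2 * (INR k + 1) * x <= x * x * x) by nra.
  assert (Hsub : 2 * (INR k + 1) * (x * hermite_poly k x) <= 2 * (INR k + 1) * hermite_poly (S k) x)
    by (apply Rmult_le_compat_l; lra).
  nra.
Qed.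

Lemma hermite_poly_no_common_zero k x :
  ~ (hermite_poly k x = 0 /\ hermite_poly (S k) x = 0).
Proof.
  induction k as [|k IH]; [simpl; lra|].
  intros [H1 H2]. apply IH. split; [|exact H1].
  rewrite hermite_poly_SS, H1 in H2.
  assert (0 < INR (S k)) by (apply lt_0_INR; lia). nra.
Qed.

Lemma hermite_poly_continuity k : continuity (hermite_poly k).
Proof.
  intro x. apply derivable_continuous_pt.
  eexists. apply is_derive_Reals, is_derive_hermite_poly.
Qed.

Definition hermite_norm (k : nat) : R := / (2 ^ k * INR (fact k) * sqrt PI).

Lemma hermite_norm_pos k : 0 < hermite_norm k.
Proof.
  unfold hermite_norm. apply Rinv_0_lt_compat.
  repeat apply Rmult_lt_0_compat; [apply pow_lt; lra|apply INR_fact_pos|apply sqrt_lt_R0, PI_RGT_0].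
Qed.

Lemma hermite_norm_S k : 2 * INR (S k) * hermite_norm (S k) = hermite_norm k.
Proof.
  unfold hermite_norm. rewrite fact_simpl, mult_INR. simpl pow.
  assert (0 < INR (fact k)) by apply INR_fact_pos.
  assert (0 < sqrt PI) by apply sqrt_lt_R0, PI_RGT_0.
  assert (0 < 2 ^ k) by (apply pow_lt; lra).
  assert (0 < INR (S k)) by (apply lt_0_INR; lia).
  field. repeat split; lra.
Qed.

Lemma hermite_fun_poly k t :
  hermite_fun k t = hermite_norm k * exp (- (t ^ 2)) * hermite_poly k t.
Proof. unfold hermite_fun, hermite_norm. now rewrite hermite_eq_poly. Qed.

Lemma is_derive_hermite_fun k x :
  is_derive (hermite_fun k) x (-2 * INR (S k) * hermite_fun (S k) x).
Proof.
  apply (is_derive_ext (fun y => hermite_norm k * exp (- (y ^ 2)) * hermite_poly k y)).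
  { intro y; symmetry; apply hermite_fun_poly. }
  eapply is_derive_eq.
  - apply is_derive_Rmult; [apply is_derive_scal, is_derive_gaussian|apply is_derive_hermite_poly].
  - rewrite hermite_fun_poly, (hermite_poly_S k x), <- (hermite_norm_S k). ring.
Qed.

Lemma inner_sum_SS n i x :
  inner_sum (S n) (S i) x =
  INR (fact n) / INR (fact (S i)) * x ^ (S i) * hermite_fun n x + / 2 * inner_sum n i x.
Proof.
  unfold inner_sum.
  rewrite sum_Sn_m, <- sum_n_m_S, <- (sum_n_m_mult_l (K := R_Ring)) by lia.
  unfold_R_ops. f_equal.
  - replace (S n - 1 - 0)%nat with n by lia. replace (S i - 0)%nat with (S i) by lia.
    simpl pow. field. apply Rgt_not_eq, INR_fact_pos.
  - apply sum_n_m_ext. intro k. unfold_R_ops.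
    replace (S n - 1 - S k)%nat with (n - 1 - k)%nat by lia.
    replace (S i - S k)%nat with (i - k)%nat by lia.
    assert (0 < INR (fact (i - k))) by apply INR_fact_pos.
    assert (0 < 2 ^ k) by (apply pow_lt; lra).
    simpl pow. field. lra.
Qed.

Lemma inner_sum_0 n x : inner_sum (S n) 0 x = INR (fact n) * hermite_fun n x.
Proof.
  unfold inner_sum. rewrite sum_n_n.
  replace (S n - 1 - 0)%nat with n by lia. simpl. field.
Qed.

Lemma is_derive_inner_sum n i x : (i < n)%nat ->
  is_derive (inner_sum n i) x (-2 * INR (fact n) / INR (fact i) * x ^ i * hermite_fun n x).
Proof.
  revert n; induction i as [|i IH]; intros [|n] Hin; try lia.
  - apply (is_derive_ext (fun y => INR (fact n) * hermite_fun n y)).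
    { intro y; symmetry; apply inner_sum_0. }
    eapply is_derive_eq; [apply is_derive_scal, is_derive_hermite_fun|].
    rewrite fact_simpl, mult_INR. simpl. field.
  - apply (is_derive_ext (fun y => INR (fact n) / INR (fact (S i)) * y ^ (S i) * hermite_fun n y
                                  + / 2 * inner_sum n i y)).
    { intro y; symmetry; apply inner_sum_SS. }
    eapply is_derive_eq.
    + apply is_derive_Rplus.
      * apply is_derive_Rmult; [apply is_derive_scal, is_derive_Rpow_id|apply is_derive_hermite_fun].
      * apply is_derive_scal, IH; lia.
    + replace (S i - 1)%nat with i by lia.
      rewrite (fact_simpl i), (fact_simpl n), !mult_INR.
      assert (0 < INR (fact i)) by apply INR_fact_pos.
      assert (0 < INR (fact n)) by apply INR_fact_pos.
      assert (0 < INR (S i)) by (apply lt_0_INR; lia).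
      simpl pow. field. lra.
Qed.

Lemma inner_sum_at_0 n i : (1 <= i)%nat ->
  inner_sum n i 0 = INR (fact (n - 1 - i)) / 2 ^ i * hermite_fun (n - 1 - i) 0.
Proof.
  intro Hi. destruct i as [|i]; [lia|]. unfold inner_sum.
  rewrite sum_n_Sm, (sum_n_m_ext_loc _ (fun _ => zero)), sum_n_m_const_zero by
    (lia || (intros k Hk; rewrite pow_i by lia; unfold_R_ops; ring)).
  unfold_R_ops. replace (S i - S i)%nat with 0%nat by lia. simpl.
  assert (0 < 2 ^ i) by (apply pow_lt; lra). field. lra.
Qed.

(** * Rapid decay *)

Definition rapidly_decreasing (f : R -> R) : Prop :=
  forall m, exists C, forall x, 1 <= Rabs x -> Rabs (x ^ m * f x) <= C.

Lemma rapidly_decreasing_ext f g :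
  (forall x, f x = g x) -> rapidly_decreasing f -> rapidly_decreasing g.
Proof. intros E Hf m. destruct (Hf m) as [C HC]. exists C. intros x Hx. rewrite <- E. auto. Qed.

Lemma rapidly_decreasing_lin a b f g :
  rapidly_decreasing f -> rapidly_decreasing g -> rapidly_decreasing (fun x => a * f x + b * g x).
Proof.
  intros Hf Hg m. destruct (Hf m) as [C1 H1], (Hg m) as [C2 H2].
  exists (Rabs a * C1 + Rabs b * C2). intros x Hx.
  replace (x ^ m * (a * f x + b * g x)) with (a * (x ^ m * f x) + b * (x ^ m * g x)) by ring.
  eapply Rle_trans; [apply Rabs_triang|]. rewrite (Rabs_mult a), (Rabs_mult b).
  apply Rplus_le_compat; apply Rmult_le_compat_l; auto using Rabs_pos.
Qed.

Lemma rapidly_decreasing_pow_mul j f :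
  rapidly_decreasing f -> rapidly_decreasing (fun x => x ^ j * f x).
Proof.
  intros Hf m. destruct (Hf (m + j)%nat) as [C H]. exists C. intros x Hx.
  rewrite <- Rmult_assoc, <- pow_add. auto.
Qed.

Lemma rapidly_decreasing_sum (F : nat -> R -> R) a b :
  (forall k, rapidly_decreasing (F k)) -> rapidly_decreasing (fun x => sum_n_m (fun k => F k x) a b).
Proof.
  intro HF. induction b as [|b IH].
  - destruct a as [|a].
    + eapply rapidly_decreasing_ext; [|apply (HF 0%nat)]. intro x. now rewrite sum_n_n.
    + eapply rapidly_decreasing_ext; [|apply (rapidly_decreasing_lin 0 0 _ _ (HF 0%nat) (HF 0%nat))].
      intro x. rewrite sum_n_m_zero by lia. unfold_R_ops. ring.
  - destruct (le_lt_dec a (S b)) as [Hab|Hab].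
    + eapply rapidly_decreasing_ext; [|apply (rapidly_decreasing_lin 1 1 _ _ IH (HF (S b)))].
      intro x. rewrite sum_n_Sm by lia. unfold_R_ops. ring.
    + eapply rapidly_decreasing_ext; [|apply (rapidly_decreasing_lin 0 0 _ _ (HF 0%nat) (HF 0%nat))].
      intro x. rewrite sum_n_m_zero by lia. unfold_R_ops. ring.
Qed.

Lemma exp_INR_mult N z : exp (INR N * z) = exp z ^ N.
Proof.
  induction N as [|N IH]; [simpl; now rewrite Rmult_0_l, exp_0|].
  rewrite S_INR, Rmult_plus_distr_r, Rmult_1_l, exp_plus, IH. simpl; ring.
Qed.

Lemma pow_le_exp N z : 0 <= z -> z ^ N <= INR N ^ N * exp z.
Proof.
  intro Hz. destruct N as [|N]; [simpl; pose proof (exp_ineq1_le z); lra|].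
  set (M := INR (S N)). assert (HM : 0 < M) by (apply lt_0_INR; lia).
  (* [exp z = exp (z / M) ^ M >= (z / M) ^ M] *)
  assert (Hexp : (z / M) ^ S N <= exp z).
  { replace z with (M * (z / M)) at 2 by (field; lra). unfold M at 2. rewrite exp_INR_mult.
    apply pow_incr. pose proof (exp_ineq1_le (z / M)).
    assert (0 <= z / M) by (apply Rdiv_le_0_compat; lra). lra. }
  replace (z ^ S N) with (M ^ S N * (z / M) ^ S N)
    by (rewrite <- Rpow_mult_distr; f_equal; field; lra).
  apply Rmult_le_compat_l; [apply pow_le; lra|exact Hexp].
Qed.

Lemma rapidly_decreasing_gaussian : rapidly_decreasing (fun x => exp (- (x ^ 2))).
Proof.
  intro m. exists (INR m ^ m). intros x Hx.
  rewrite Rabs_mult, (Rabs_right (exp _)) by (apply Rle_ge, Rlt_le, exp_pos).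
  assert (Hpow : Rabs (x ^ m) <= (x ^ 2) ^ m).
  { rewrite <- RPow_abs, <- (pow2_abs x), <- pow_mult. apply Rle_pow; [exact Hx|lia]. }
  pose proof (pow_le_exp m (x ^ 2) (pow2_ge_0 x)).
  assert (Hinv : exp (x ^ 2) * exp (- x ^ 2) = 1) by (rewrite <- exp_plus, Rplus_opp_r; apply exp_0).
  assert (0 < exp (- x ^ 2)) by apply exp_pos.
  apply Rle_trans with ((x ^ 2) ^ m * exp (- x ^ 2)); [apply Rmult_le_compat_r; lra|].
  apply Rle_trans with (INR m ^ m * exp (x ^ 2) * exp (- x ^ 2)); [apply Rmult_le_compat_r; lra|].
  rewrite Rmult_assoc, Hinv. lra.
Qed.

Lemma rapidly_decreasing_hermite_poly_gaussian k :
  rapidly_decreasing (fun x => hermite_poly k x * exp (- (x ^ 2))).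
Proof.
  induction k as [k IH] using lt_wf_ind. destruct k as [|[|k]].
  - eapply rapidly_decreasing_ext; [|apply rapidly_decreasing_gaussian]. intro x; simpl; ring.
  - eapply rapidly_decreasing_ext;
      [|apply (rapidly_decreasing_lin 2 0 _ _ (rapidly_decreasing_pow_mul 1 _ rapidly_decreasing_gaussian)
                                             rapidly_decreasing_gaussian)].
    intro x; simpl; ring.
  - eapply rapidly_decreasing_ext;
      [|apply (rapidly_decreasing_lin 2 (- (2 * INR (S k))) _ _
                 (rapidly_decreasing_pow_mul 1 _ (IH (S k) ltac:(lia))) (IH k ltac:(lia)))].
    intro x. rewrite hermite_poly_SS. simpl; ring.
Qed.

Lemma rapidly_decreasing_hermite_fun k : rapidly_decreasing (hermite_fun k).
Proof.
  eapply rapidly_decreasing_ext;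
    [|apply (rapidly_decreasing_lin (hermite_norm k) 0 _ _
               (rapidly_decreasing_hermite_poly_gaussian k) rapidly_decreasing_gaussian)].
  intro x. rewrite hermite_fun_poly. ring.
Qed.

Lemma rapidly_decreasing_inner_sum n i : rapidly_decreasing (inner_sum n i).
Proof.
  apply rapidly_decreasing_sum. intro k.
  eapply rapidly_decreasing_ext;
    [|apply (rapidly_decreasing_lin (INR (fact (n - 1 - k)) / (2 ^ k * INR (fact (i - k)))) 0 _ _
               (rapidly_decreasing_pow_mul (i - k) _ (rapidly_decreasing_hermite_fun (n - 1 - k)))
               rapidly_decreasing_gaussian)].
  intro x. simpl. ring.
Qed.

Lemma rapidly_decreasing_small f : rapidly_decreasing f ->
  forall eps, 0 < eps -> exists M, 0 < M /\ forall x, M < Rabs x -> Rabs (f x) < eps.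
Proof.
  intros Hf eps Heps. destruct (Hf 1%nat) as [C HC].
  pose proof (Rmax_l 1 (C / eps)). pose proof (Rmax_r 1 (C / eps)).
  exists (Rmax 1 (C / eps)). split; [lra|]. intros x Hx.
  specialize (HC x ltac:(lra)). rewrite pow_1, Rabs_mult in HC.
  assert (HCe : C < eps * Rabs x).
  { apply Rle_lt_trans with (eps * (C / eps)); [right; field; lra|].
    apply Rmult_lt_compat_l; lra. }
  apply Rmult_lt_reg_l with (Rabs x); [lra|]. rewrite (Rmult_comm _ eps). lra.
Qed.

Lemma rapidly_decreasing_lim f : rapidly_decreasing f ->
  filterlim f (Rbar_locally m_infty) (locally 0) /\ filterlim f (Rbar_locally p_infty) (locally 0).
Proof.
  intro Hf. split; apply filterlim_locally; intro eps;
    destruct (rapidly_decreasing_small f Hf eps (cond_pos eps)) as [M [HM0 HM]];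
    [exists (- M)|exists M]; intros x Hx;
    change (Rabs (f x - 0) < eps); rewrite Rminus_0_r; apply HM;
    [rewrite Rabs_left|rewrite Rabs_right]; lra.
Qed.

(** * Integrating a piecewise multiple of a function with decaying antiderivative *)

Definition between (p : nat -> R) (K j : nat) (x : R) : Prop :=
  ((1 <= j)%nat -> p j < x) /\ ((j < K)%nat -> x < p (S j)).

Section Piecewise.

Variables f A : R -> R.
Hypothesis A_derive : forall x, is_derive A x (f x).
Hypothesis f_continuous : forall x, continuous f x.
Hypothesis A_lim_m_infty : filterlim A (Rbar_locally m_infty) (locally 0).
Hypothesis A_lim_p_infty : filterlim A (Rbar_locally p_infty) (locally 0).

Lemma filterlim_at_point_A b : filterlim A (at_point b) (locally (A b)).
Proof. intros P HP. exact (locally_singleton _ P HP). Qed.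

Lemma is_RInt_gen_scal_piece (F : R -> R) s Fa Fb {FFa : Filter Fa} {FFb : Filter Fb} la lb :
  filterlim A Fa (locally la) -> filterlim A Fb (locally lb) ->
  filter_prod Fa Fb (fun ab => forall x, Rmin (fst ab) (snd ab) < x < Rmax (fst ab) (snd ab) ->
                                   F x = s * f x) ->
  is_RInt_gen F Fa Fb (s * (lb - la)).
Proof.
  intros Ha Hb HF.
  apply (is_RInt_gen_ext (fun x => scal s (Derive A x))).
  - eapply filter_imp; [|exact HF]. intros ab H x Hx.
    rewrite H by exact Hx. now rewrite (is_derive_unique _ _ _ (A_derive x)).
  - apply (is_RInt_gen_scal (fun x => Derive A x) s (lb - la)).
    apply is_RInt_gen_Derive; trivial; apply filter_forall; intros ab x _.
    + exists (f x). apply A_derive.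
    + apply (continuous_ext f); [|apply f_continuous].
      intro y. symmetry. apply is_derive_unique, A_derive.
Qed.

Section Breakpoints.

Variables (K : nat) (p sg : nat -> R) (F : R -> R).
Hypothesis K_pos : (1 <= K)%nat.
Hypothesis p_increasing : forall k, (1 <= k)%nat -> (k < K)%nat -> p k < p (S k).
Hypothesis F_piecewise : forall j x, (j <= K)%nat -> between p K j x -> F x = sg j * f x.

Lemma is_RInt_gen_first_piece :
  is_RInt_gen F (Rbar_locally m_infty) (at_point (p 1%nat)) (sg 0%nat * (A (p 1%nat) - 0)).
Proof.
  apply is_RInt_gen_scal_piece; try exact _; auto using filterlim_at_point_A.
  apply (Filter_prod _ _ _ (fun a => a < p 1%nat) (fun b => b = p 1%nat)); [now exists (p 1%nat)|easy|].
  intros a b Ha -> x. simpl. rewrite Rmin_left, Rmax_right by lra. intro Hx.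
  apply F_piecewise; [lia|split; intros; [lia|lra]].
Qed.

Lemma is_RInt_gen_middle_piece j : (1 <= j)%nat -> (j < K)%nat ->
  is_RInt_gen F (at_point (p j)) (at_point (p (S j))) (sg j * (A (p (S j)) - A (p j))).
Proof.
  intros Hj1 HjK. pose proof (p_increasing j Hj1 HjK).
  apply is_RInt_gen_scal_piece; try exact _; auto using filterlim_at_point_A.
  apply (Filter_prod _ _ _ (fun a => a = p j) (fun b => b = p (S j))); try easy.
  intros a b -> -> x. simpl. rewrite Rmin_left, Rmax_right by lra. intro Hx.
  apply F_piecewise; [lia|split; intros; lra].
Qed.

Lemma is_RInt_gen_last_piece :
  is_RInt_gen F (at_point (p K)) (Rbar_locally p_infty) (sg K * (0 - A (p K))).
Proof.
  apply is_RInt_gen_scal_piece; try exact _; auto using filterlim_at_point_A.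
  apply (Filter_prod _ _ _ (fun a => a = p K) (fun b => p K < b)); [easy|now exists (p K)|].
  intros a b -> Hb x. simpl. rewrite Rmin_left, Rmax_right by lra. intro Hx.
  apply F_piecewise; [lia|split; intros; [lra|lia]].
Qed.

Let jump_sum (k : nat) : R := sum_n_m (fun m => (sg (m - 1)%nat - sg m) * A (p m)) 1 k.

Lemma is_RInt_gen_up_to_breakpoint k : (1 <= k <= K)%nat ->
  is_RInt_gen F (Rbar_locally m_infty) (at_point (p k)) (jump_sum k + sg k * A (p k)).
Proof.
  induction k as [|k IH]; intro Hk; [lia|].
  destruct (Nat.eq_dec k 0) as [->|Hk0].
  - unfold jump_sum. rewrite sum_n_n.
    replace ((sg (1 - 1)%nat - sg 1%nat) * A (p 1%nat) + sg 1%nat * A (p 1%nat))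
      with (sg 0%nat * (A (p 1%nat) - 0)) by (simpl; ring).
    exact is_RInt_gen_first_piece.
  - replace (jump_sum (S k) + sg (S k) * A (p (S k)))
      with (plus (jump_sum k + sg k * A (p k)) (sg k * (A (p (S k)) - A (p k)))).
    + apply (is_RInt_gen_Chasles F (p k)); [apply IH; lia|apply is_RInt_gen_middle_piece; lia].
    + unfold jump_sum. rewrite sum_n_Sm by lia. replace (S k - 1)%nat with k by lia.
      unfold_R_ops. ring.
Qed.

Lemma is_integral_R_piecewise : is_integral_R F (jump_sum K).
Proof.
  replace (jump_sum K) with (plus (jump_sum K + sg K * A (p K)) (sg K * (0 - A (p K))))
    by (unfold_R_ops; ring).
  apply (is_RInt_gen_Chasles F (p K)); [apply is_RInt_gen_up_to_breakpoint; lia|].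
  exact is_RInt_gen_last_piece.
Qed.

End Breakpoints.

Corollary is_integral_R_alternating (K : nat) (p : nat -> R) (c : R) (F : R -> R) : (1 <= K)%nat ->
  (forall k, (1 <= k)%nat -> (k < K)%nat -> p k < p (S k)) ->
  (forall j x, (j <= K)%nat -> between p K j x -> F x = c * (-1) ^ j * f x) ->
  is_integral_R F (-2 * c * sum_n_m (fun m => (-1) ^ m * A (p m)) 1 K).
Proof.
  intros HK Hp HF.
  replace (-2 * c * sum_n_m (fun m => (-1) ^ m * A (p m)) 1 K)
    with (sum_n_m (fun m => (c * (-1) ^ (m - 1)%nat - c * (-1) ^ m) * A (p m)) 1 K).
  - apply (is_integral_R_piecewise K p (fun j => c * (-1) ^ j)); auto.
  - rewrite <- (sum_n_m_mult_l (K := R_Ring)). apply sum_n_m_ext_loc. intros [|m] Hm; [lia|].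
    replace (S m - 1)%nat with m by lia. unfold_R_ops. simpl. ring.
Qed.

End Piecewise.

(** * Signs between consecutive zeros *)

Lemma continuity_sign_preserved (g : R -> R) (P : R -> Prop) : continuity g ->
  (forall x y z, P x -> P y -> Rmin x y <= z <= Rmax x y -> P z) ->
  (forall z, P z -> g z <> 0) ->
  forall x y, P x -> P y -> 0 < g x -> 0 < g y.
Proof.
  intros Hg Hconv Hne x y Hx Hy Hgx.
  destruct (Rlt_le_dec 0 (g y)) as [|Hgy]; [easy|exfalso].
  destruct (IVT_gen g x y 0 Hg) as [z [Hz Hgz]].
  - pose proof (Rmin_r (g x) (g y)). pose proof (Rmax_l (g x) (g y)). lra.
  - exact (Hne z (Hconv x y z Hx Hy Hz) Hgz).
Qed.

Lemma opposite_signs_near_simple_zero (g : R -> R) z d :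
  g z = 0 -> is_derive g z d -> d <> 0 ->
  exists del, 0 < del /\ forall h, 0 < h < del -> g (z + h) * g (z - h) < 0.
Proof.
  intros Hz Hd Hd0. apply is_derive_Reals in Hd.
  destruct (Hd (Rabs d) (Rabs_pos_lt d Hd0)) as [del Hdel].
  (* near [z], the difference quotient [g (z + h) / h] has the sign of [d] *)
  assert (Hquot : forall h, h <> 0 -> Rabs h < del -> 0 < g (z + h) / h * d).
  { intros h Hh Hhd. specialize (Hdel h Hh Hhd). rewrite Hz, Rminus_0_r in Hdel.
    destruct (Rle_or_lt 0 d);
      [rewrite (Rabs_right d) in Hdel by lra|rewrite (Rabs_left d) in Hdel by lra];
      apply Rabs_def2 in Hdel; nra. }
  exists del. split; [apply cond_pos|]. intros h Hh.
  assert (Hp := Hquot h ltac:(lra) ltac:(rewrite Rabs_right; lra)).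
  assert (Hm := Hquot (- h) ltac:(lra) ltac:(rewrite Rabs_left; lra)).
  replace (z - h) with (z + - h) by ring.
  assert (E : g (z + h) * g (z + - h) * (d * d)
              = - (h * h) * ((g (z + h) / h * d) * (g (z + - h) / - h * d))) by (field; lra).
  assert (Hprod : g (z + h) * g (z + - h) * (d * d) < 0).
  { rewrite E. assert (0 < h * h) by nra.
    pose proof (Rmult_lt_0_compat _ _ Hp Hm). nra. }
  assert (Hdd : 0 < d * d) by (apply Rsqr_pos_lt, Hd0).
  destruct (Rlt_or_le (g (z + h) * g (z + - h)) 0) as [|Hnn]; [easy|].
  pose proof (Rmult_le_pos _ _ Hnn (Rlt_le _ _ Hdd)). lra.
Qed.

Lemma increasing_enumeration_unique (n : nat) (u v : nat -> R) :
  (forall a b, (1 <= a)%nat -> (a < b)%nat -> (b <= n)%nat -> u a < u b) ->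
  (forall a b, (1 <= a)%nat -> (a < b)%nat -> (b <= n)%nat -> v a < v b) ->
  (forall k, (1 <= k <= n)%nat -> exists j, (1 <= j <= n)%nat /\ u k = v j) ->
  (forall k, (1 <= k <= n)%nat -> exists j, (1 <= j <= n)%nat /\ v k = u j) ->
  forall m, (1 <= m <= n)%nat -> u m = v m.
Proof.
  intros Hu Hv Huv Hvu m. induction m as [m IH] using lt_wf_ind. intro Hm.
  destruct (Huv m Hm) as [j [Hj Ej]], (Hvu m Hm) as [j' [Hj' Ej']].
  assert (v m <= u m).
  { destruct (lt_eq_lt_dec j m) as [[Hjm| ->]|Hjm]; [|lra|].
    - exfalso. pose proof (IH j Hjm Hj). pose proof (Hu j m ltac:(lia) Hjm ltac:(lia)). lra.
    - pose proof (Hv m j ltac:(lia) Hjm ltac:(lia)). lra. }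
  assert (u m <= v m).
  { destruct (lt_eq_lt_dec j' m) as [[Hjm| ->]|Hjm]; [|lra|].
    - exfalso. pose proof (IH j' Hjm Hj'). pose proof (Hv j' m ltac:(lia) Hjm ltac:(lia)). lra.
    - pose proof (Hu m j' ltac:(lia) Hjm ltac:(lia)). lra. }
  lra.
Qed.

Section HermiteZeros.

Variables (n : nat) (t : nat -> R).
Hypothesis n_pos : (1 <= n)%nat.
Hypothesis t_increasing : forall m, (1 <= m)%nat -> (m < n)%nat -> t m < t (S m).
Hypothesis t_zeros : forall x, hermite_poly n x = 0 <-> exists m, (1 <= m <= n)%nat /\ x = t m.

Lemma t_lt a b : (1 <= a)%nat -> (a < b)%nat -> (b <= n)%nat -> t a < t b.
Proof.
  intros Ha Hab Hb. induction b as [|b IH]; [lia|].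
  destruct (Nat.eq_dec a b) as [->|Hne]; [now apply t_increasing|].
  apply Rlt_trans with (t b); [apply IH|apply t_increasing]; lia.
Qed.

Lemma t_le a b : (1 <= a)%nat -> (a <= b)%nat -> (b <= n)%nat -> t a <= t b.
Proof.
  intros Ha Hab Hb. destruct (Nat.eq_dec a b) as [->|]; [lra|].
  left; apply t_lt; lia.
Qed.

Lemma between_convex m x y z :
  between t n m x -> between t n m y -> Rmin x y <= z <= Rmax x y -> between t n m z.
Proof.
  intros [Hx1 Hx2] [Hy1 Hy2] Hz. unfold Rmin, Rmax in Hz.
  split; intro Hm; [specialize (Hx1 Hm); specialize (Hy1 Hm)|specialize (Hx2 Hm); specialize (Hy2 Hm)];
    destruct (Rle_dec x y); lra.
Qed.

Lemma hermite_poly_between_neq_0 m x : (m <= n)%nat -> between t n m x -> hermite_poly n x <> 0.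
Proof.
  intros Hm [H1 H2] Hzero. apply t_zeros in Hzero as [j [Hj ->]].
  destruct (le_lt_dec j m).
  - pose proof (t_le j m ltac:(lia) ltac:(lia) Hm). specialize (H1 ltac:(lia)). lra.
  - pose proof (t_le (S m) j ltac:(lia) ltac:(lia) ltac:(lia)). specialize (H2 ltac:(lia)). lra.
Qed.

Lemma between_near_zero m : (1 <= m <= n)%nat ->
  exists e, 0 < e /\ forall h, 0 < h < e -> between t n m (t m + h) /\ between t n (m - 1) (t m - h).
Proof.
  intro Hm.
  set (gap_r := if lt_dec m n then t (S m) - t m else 1).
  set (gap_l := if lt_dec 1 m then t m - t (m - 1) else 1).
  assert (0 < gap_r).
  { unfold gap_r. destruct (lt_dec m n); [pose proof (t_increasing m ltac:(lia) ltac:(lia))|]; lra. }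
  assert (0 < gap_l).
  { unfold gap_l. destruct (lt_dec 1 m); [|lra].
    pose proof (t_increasing (m - 1) ltac:(lia) ltac:(lia)). replace (S (m - 1)) with m in * by lia. lra. }
  exists (Rmin gap_l gap_r). split; [now apply Rmin_glb_lt|]. intros h Hh.
  pose proof (Rmin_l gap_l gap_r). pose proof (Rmin_r gap_l gap_r).
  split; split; intros.
  - lra.
  - unfold gap_r in *. destruct (lt_dec m n); [lra|lia].
  - unfold gap_l in *. destruct (lt_dec 1 m); [lra|lia].
  - replace (S (m - 1)) with m by lia. lra.
Qed.

Lemma hermite_poly_pos_after_zeros x : between t n n x -> 0 < hermite_poly n x.
Proof.
  intro Hx. set (X := Rmax (t n + 1) (INR n + 1)).
  assert (HX : between t n n X).
  { split; intros; [|lia]. pose proof (Rmax_l (t n + 1) (INR n + 1)). unfold X; lra. }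
  apply (continuity_sign_preserved (hermite_poly n) (between t n n)) with X; trivial.
  - apply hermite_poly_continuity.
  - apply between_convex.
  - intros z Hz. exact (hermite_poly_between_neq_0 n z (Nat.le_refl n) Hz).
  - apply hermite_poly_large, Rmax_r.
Qed.

Lemma hermite_poly_sign_flip m s : (1 <= m <= n)%nat ->
  (forall x, between t n m x -> 0 < s * hermite_poly n x) ->
  forall x, between t n (m - 1) x -> 0 < - s * hermite_poly n x.
Proof.
  intros Hm Hsign x Hx.
  assert (Hzero : hermite_poly n (t m) = 0) by (apply t_zeros; now exists m).
  assert (Hd0 : 2 * INR n * hermite_poly (n - 1) (t m) <> 0).
  { assert (0 < INR n) by (apply lt_0_INR; lia).
    intro E. apply (hermite_poly_no_common_zero (n - 1) (t m)).
    replace (S (n - 1)) with n by lia. split; [nra|exact Hzero]. }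
  destruct (opposite_signs_near_simple_zero (hermite_poly n) (t m) _ Hzero
              (is_derive_hermite_poly n (t m)) Hd0) as [del [Hdel Hopp]].
  destruct (between_near_zero m Hm) as [e [He Hnear]].
  set (h := Rmin del e / 2).
  assert (Hh : 0 < h < del /\ h < e).
  { pose proof (Rmin_l del e). pose proof (Rmin_r del e).
    assert (0 < Rmin del e) by (now apply Rmin_glb_lt). unfold h; lra. }
  destruct (Hnear h ltac:(lra)) as [Hright Hleft].
  pose proof (Hsign _ Hright). pose proof (Hopp h ltac:(lra)).
  apply (continuity_sign_preserved (fun u => - s * hermite_poly n u) (between t n (m - 1)))
    with (t m - h); trivial.
  - apply continuity_scal, hermite_poly_continuity.
  - apply between_convex.
  - intros z Hz. cbv beta. apply Rmult_integral_contrapositive.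
    split; [intro; nra|apply (hermite_poly_between_neq_0 (m - 1)); [lia|exact Hz]].
  - cbv beta. nra.
Qed.

Lemma hermite_poly_sign_between m x : (m <= n)%nat -> between t n m x ->
  0 < (-1) ^ (m + n) * hermite_poly n x.
Proof.
  intros Hm Hx.
  assert (Hdown : forall j, (j <= n)%nat -> forall x, between t n (n - j) x ->
                    0 < (-1) ^ j * hermite_poly n x).
  { induction j as [|j IH]; intros Hj y Hy.
    - rewrite pow_O, Rmult_1_l. apply hermite_poly_pos_after_zeros.
      now rewrite Nat.sub_0_r in Hy.
    - rewrite pow_m1_S. apply (hermite_poly_sign_flip (n - j)); [lia|apply IH; lia|].
      now replace (n - j - 1)%nat with (n - S j)%nat by lia. }
  replace (m + n)%nat with ((n - m) + 2 * m)%nat by lia.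
  rewrite pow_add, pow_1_even, Rmult_1_r.
  apply Hdown; [lia|]. now replace (n - (n - m))%nat with m by lia.
Qed.

Lemma Rabs_hermite_fun_between m x : (m <= n)%nat -> between t n m x ->
  Rabs (hermite_fun n x) = (-1) ^ (m + n) * hermite_fun n x.
Proof.
  intros Hm Hx. pose proof (hermite_poly_sign_between m x Hm Hx).
  rewrite hermite_fun_poly, !Rabs_mult.
  rewrite (Rabs_right (hermite_norm n)) by (apply Rle_ge, Rlt_le, hermite_norm_pos).
  rewrite (Rabs_right (exp _)) by (apply Rle_ge, Rlt_le, exp_pos).
  rewrite <- (Rmult_1_l (Rabs (hermite_poly n x))), <- (pow_1_abs (m + n)), <- Rabs_mult.
  rewrite Rabs_right by lra. ring.
Qed.

Lemma opp_t_zero k : (1 <= k <= n)%nat -> exists j, (1 <= j <= n)%nat /\ - t k = t j.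
Proof.
  intro Hk. apply t_zeros. rewrite hermite_poly_opp.
  replace (hermite_poly n (t k)) with 0 by (symmetry; apply t_zeros; now exists k).
  ring.
Qed.

Lemma t_opp m : (1 <= m <= n)%nat -> t m = - t (S n - m).
Proof.
  apply (increasing_enumeration_unique n t (fun k => - t (S n - k))).
  - exact t_lt.
  - intros a b Ha Hab Hb. pose proof (t_lt (S n - b) (S n - a) ltac:(lia) ltac:(lia) ltac:(lia)). lra.
  - intros k Hk. destruct (opp_t_zero k Hk) as [j [Hj E]].
    exists (S n - j)%nat. split; [lia|]. replace (S n - (S n - j))%nat with j by lia. lra.
  - intros k Hk. apply opp_t_zero. lia.
Qed.

End HermiteZeros.

(** * The moments of [|h_n|] *)

Lemma Rabs_pow_odd i x : Nat.Odd i -> x < 0 -> Rabs x ^ i = - x ^ i.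
Proof.
  intros [q ->] Hx. rewrite Rabs_left by lra.
  replace (2 * q + 1)%nat with (S (2 * q)) by lia.
  replace (- x) with (-1 * x) by ring. rewrite Rpow_mult_distr, pow_1_odd. ring.
Qed.

Section Moments.

Variables (n i : nat) (t : nat -> R).
Hypothesis n_pos : (1 <= n)%nat.
Hypothesis i_lt_n : (i < n)%nat.
Hypothesis t_increasing : forall m, (1 <= m)%nat -> (m < n)%nat -> t m < t (S m).
Hypothesis t_zeros : forall x, hermite_poly n x = 0 <-> exists m, (1 <= m <= n)%nat /\ x = t m.

Let f (x : R) : R := x ^ i / INR (fact i) * hermite_fun n x.

Lemma is_integral_R_alternating_moment (K : nat) (p : nat -> R) (c : R) (F : R -> R) : (1 <= K)%nat ->
  (forall k, (1 <= k)%nat -> (k < K)%nat -> p k < p (S k)) ->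
  (forall j x, (j <= K)%nat -> between p K j x -> F x = c * (-1) ^ j * f x) ->
  is_integral_R F (c / INR (fact n) * sum_n_m (fun m => (-1) ^ m * inner_sum n i (p m)) 1 K).
Proof.
  intros HK Hp HF. assert (0 < INR (fact n)) by apply INR_fact_pos.
  set (A := fun x => / (-2 * INR (fact n)) * inner_sum n i x).
  replace (c / INR (fact n) * sum_n_m (fun m => (-1) ^ m * inner_sum n i (p m)) 1 K)
    with (-2 * c * sum_n_m (fun m => (-1) ^ m * A (p m)) 1 K).
  - destruct (rapidly_decreasing_lim A) as [Hm Hp'].
    { eapply rapidly_decreasing_ext; [|apply (rapidly_decreasing_lin (/ (-2 * INR (fact n))) 0 _ _
        (rapidly_decreasing_inner_sum n i) (rapidly_decreasing_inner_sum n i))].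
      intro x. unfold A. ring. }
    apply (is_integral_R_alternating f A); trivial.
    + intro x. unfold A. eapply is_derive_eq; [apply is_derive_scal, is_derive_inner_sum, i_lt_n|].
      unfold f. assert (0 < INR (fact i)) by apply INR_fact_pos. field. lra.
    + intro x. apply (ex_derive_continuous (V := R_NormedModule)). eexists.
      apply (is_derive_ext (fun y => / INR (fact i) * (y ^ i * hermite_fun n y))).
      { intro y. unfold f, Rdiv. unfold_R_ops. ring. }
      apply is_derive_scal, is_derive_Rmult; [apply is_derive_Rpow_id|apply is_derive_hermite_fun].
  - rewrite <- !(sum_n_m_mult_l (K := R_Ring)). apply sum_n_m_ext. intro m. unfold A. unfold_R_ops.
    field. lra.
Qed.

Lemma moment_integrand_between m x : (m <= n)%nat -> between t n m x ->
  x ^ i / INR (fact i) * Rabs (hermite_fun n x) = (-1) ^ (m + n) * f x.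
Proof.
  intros Hm Hx. rewrite (Rabs_hermite_fun_between n t n_pos t_increasing t_zeros m x Hm Hx).
  unfold f. ring.
Qed.

Lemma abs_moment_integrand_neg m x : Nat.Odd i -> (m <= n)%nat -> between t n m x -> x < 0 ->
  Rabs x ^ i / INR (fact i) * Rabs (hermite_fun n x) = - (-1) ^ (m + n) * f x.
Proof.
  intros Hi Hm Hx Hneg. rewrite Rabs_pow_odd by assumption.
  transitivity (- (x ^ i / INR (fact i) * Rabs (hermite_fun n x))); [unfold Rdiv; ring|].
  rewrite (moment_integrand_between m) by assumption. ring.
Qed.

Lemma abs_moment_integrand_nonneg m x : (m <= n)%nat -> between t n m x -> 0 <= x ->
  Rabs x ^ i / INR (fact i) * Rabs (hermite_fun n x) = (-1) ^ (m + n) * f x.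
Proof. intros Hm Hx Hpos. rewrite Rabs_right by lra. now apply moment_integrand_between. Qed.

Lemma moment_even_case : Nat.Even i ->
  is_integral_R (fun x => x ^ i / INR (fact i) * Rabs (hermite_fun n x))
    (/ INR (fact n) * sum_n_m (fun m => (-1) ^ (m + n) * inner_sum n i (t m)) 1 n).
Proof.
  intros _.
  replace (/ INR (fact n) * sum_n_m (fun m => (-1) ^ (m + n) * inner_sum n i (t m)) 1 n)
    with ((-1) ^ n / INR (fact n) * sum_n_m (fun m => (-1) ^ m * inner_sum n i (t m)) 1 n).
  - apply is_integral_R_alternating_moment; trivial.
    intros j x Hj Hx. rewrite (moment_integrand_between j), pow_add by assumption. ring.
  - rewrite <- !(sum_n_m_mult_l (K := R_Ring)). apply sum_n_m_ext. intro m. unfold_R_ops.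
    rewrite pow_add. unfold Rdiv. ring.
Qed.

Lemma moment_odd_odd_case : Nat.Odd i -> Nat.Odd n ->
  is_integral_R (fun x => Rabs x ^ i / INR (fact i) * Rabs (hermite_fun n x))
    (/ INR (fact n) * sum_n_m (fun m => (-1) ^ m * inner_sum n i (t m)) 1 ((n - 1) / 2)
     + / INR (fact n) * sum_n_m (fun m => (-1) ^ (m + 1) * inner_sum n i (t m)) ((n + 3) / 2) n).
Proof.
  intros Hi [q Hq].
  assert (Hq1 : (1 <= q)%nat) by (destruct Hi; lia).
  replace ((n - 1) / 2)%nat with q
    by (replace (n - 1)%nat with (q * 2)%nat by lia; now rewrite Nat.div_mul).
  replace ((n + 3) / 2)%nat with (S (S q))
    by (replace (n + 3)%nat with (S (S q) * 2)%nat by lia; now rewrite Nat.div_mul).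
  assert (Hpn : (-1) ^ n = -1) by (rewrite Hq, Nat.add_1_r; apply pow_1_odd).
  assert (Hmid : t (S q) = 0).
  { pose proof (t_opp n t n_pos t_increasing t_zeros (S q) ltac:(lia)) as E.
    replace (S n - S q)%nat with (S q) in E by lia. lra. }
  pose proof (t_lt n t n_pos t_increasing) as Hlt. pose proof (t_le n t n_pos t_increasing) as Hle.
  (* the middle zero [t (q + 1) = 0] is not a sign change of [|x|^i |h_n(x)|], so it is skipped *)
  set (p := fun m => if le_dec m q then t m else t (S m)).
  replace (/ INR (fact n) * _ + _)
    with (1 / INR (fact n) * sum_n_m (fun m => (-1) ^ m * inner_sum n i (p m)) 1 (2 * q)).
  - apply is_integral_R_alternating_moment; [lia| |].
    + intros k Hk1 HkK. unfold p. destruct (le_dec k q), (le_dec (S k) q); try lia; apply Hlt; lia.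
    + intros j x Hj [Hx1 Hx2]. unfold p in Hx1, Hx2. rewrite Rmult_1_l.
      destruct (lt_eq_lt_dec j q) as [[Hjq| ->]|Hjq].
      * destruct (le_dec j q), (le_dec (S j) q); try lia.
        specialize (Hx2 ltac:(lia)). pose proof (Hle (S j) (S q) ltac:(lia) ltac:(lia) ltac:(lia)).
        rewrite (abs_moment_integrand_neg j) by (try split; auto; lia || lra).
        rewrite pow_add, Hpn. ring.
      * destruct (le_dec q q), (le_dec (S q) q); try lia.
        specialize (Hx1 Hq1). specialize (Hx2 ltac:(lia)).
        destruct (Rtotal_order x 0) as [Hneg|[->|Hpos]].
        -- rewrite (abs_moment_integrand_neg q) by (try split; auto; intros; lia || lra).
           rewrite pow_add, Hpn. ring.
        -- unfold f. rewrite Rabs_R0, !pow_i by (destruct Hi; lia). unfold Rdiv. ring.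
        -- rewrite (abs_moment_integrand_nonneg (S q)) by (try split; intros; lia || lra).
           rewrite pow_add, Hpn. simpl. ring.
      * destruct (le_dec j q), (le_dec (S j) q); try lia.
        specialize (Hx1 ltac:(lia)). pose proof (Hlt (S q) (S j) ltac:(lia) ltac:(lia) ltac:(lia)).
        rewrite (abs_moment_integrand_nonneg (S j)) by (try split; intros; try apply Hx2; lia || lra).
        rewrite pow_add, Hpn. simpl. ring.
  - rewrite (sum_n_m_Chasles _ 1 q (2 * q)) by lia.
    replace (sum_n_m (fun m => (-1) ^ (m + 1) * inner_sum n i (t m)) (S (S q)) n)
      with (sum_n_m (fun m => (-1) ^ (m + 1) * inner_sum n i (t m)) (S (S q)) (S (2 * q)))
      by (f_equal; lia).
    rewrite <- sum_n_m_S. unfold_R_ops. unfold Rdiv. rewrite Rmult_1_l, Rmult_plus_distr_l.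
    f_equal; f_equal; apply sum_n_m_ext_loc; intros m Hm; unfold p.
    + destruct (le_dec m q); [easy|lia].
    + destruct (le_dec m q); [lia|]. rewrite Nat.add_1_r. simpl. ring.
Qed.

Lemma moment_odd_even_case : Nat.Odd i -> Nat.Even n ->
  is_integral_R (fun x => Rabs x ^ i / INR (fact i) * Rabs (hermite_fun n x))
    (/ INR (fact n) * sum_n_m (fun m => (-1) ^ (m + 1) * inner_sum n i (t m)) 1 (n / 2)
     + (-1) ^ (n / 2) * INR (fact (n - 1 - i)) / (INR (fact n) * 2 ^ i) * hermite_fun (n - 1 - i) 0
     + / INR (fact n) * sum_n_m (fun m => (-1) ^ m * inner_sum n i (t m)) (n / 2 + 1) n).
Proof.
  intros Hi [h Hh].
  assert (Hi1 : (1 <= i)%nat) by (destruct Hi; lia).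
  assert (Hh1 : (1 <= h)%nat) by lia.
  replace (n / 2)%nat with h by (rewrite Hh, Nat.mul_comm; now rewrite Nat.div_mul).
  assert (Hpn : (-1) ^ n = 1) by (rewrite Hh; apply pow_1_even).
  pose proof (t_lt n t n_pos t_increasing) as Hlt. pose proof (t_le n t n_pos t_increasing) as Hle.
  assert (Hsides : t h < 0 < t (S h)).
  { pose proof (t_opp n t n_pos t_increasing t_zeros h ltac:(lia)) as E.
    replace (S n - h)%nat with (S h) in E by lia.
    pose proof (t_increasing h Hh1 ltac:(lia)). lra. }
  (* [0] lies strictly between the middle zeros and is an extra sign change of [|x|^i |h_n(x)|] *)
  set (p := fun m => if le_dec m h then t m else if Nat.eq_dec m (S h) then 0 else t (pred m)).
  replace (/ INR (fact n) * _ + _ + _)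
    with (-1 / INR (fact n) * sum_n_m (fun m => (-1) ^ m * inner_sum n i (p m)) 1 (S n)).
  - apply is_integral_R_alternating_moment; [lia| |].
    + intros k Hk1 HkK. unfold p.
      destruct (le_dec k h), (le_dec (S k) h), (Nat.eq_dec k (S h)), (Nat.eq_dec (S k) (S h));
        try lia; try (replace k with h by lia; lra); try (replace k with (S h) by lia; simpl; lra);
        simpl; apply Hlt; lia.
    + intros j x Hj [Hx1 Hx2]. unfold p in Hx1, Hx2.
      destruct (le_dec j h).
      * assert (Hneg : x < 0 /\ x < t (S j)).
        { destruct (le_dec (S j) h); [|destruct (Nat.eq_dec (S j) (S h)); [|lia]].
          - pose proof (Hle (S j) h ltac:(lia) l0 ltac:(lia)). specialize (Hx2 ltac:(lia)). lra.
          - specialize (Hx2 ltac:(lia)). replace j with h by lia. lra. }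
        destruct Hneg as [Hneg Hnext].
        rewrite (abs_moment_integrand_neg j) by (try split; intros; try apply Hx1; assumption || lia || lra).
        rewrite pow_add, Hpn. ring.
      * destruct (Nat.eq_dec j (S h)) as [->|Hj'].
        -- destruct (le_dec (S (S h)) h), (Nat.eq_dec (S (S h)) (S h)); try lia.
           specialize (Hx1 ltac:(lia)). specialize (Hx2 ltac:(lia)). simpl in Hx2.
           rewrite (abs_moment_integrand_nonneg h) by (try split; intros; assumption || lia || lra).
           rewrite pow_add, Hpn. simpl. ring.
        -- destruct (le_dec (S j) h), (Nat.eq_dec (S j) (S h)); try lia.
           specialize (Hx1 ltac:(lia)). simpl in Hx2.
           pose proof (Hle (S h) (pred j) ltac:(lia) ltac:(lia) ltac:(lia)).
           rewrite (abs_moment_integrand_nonneg (pred j)) by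
             (try split; intros; try (replace (S (pred j)) with j by lia; apply Hx2); assumption || lia || lra).
           destruct j as [|j]; [lia|]. rewrite pow_add, Hpn. simpl. ring.
  - assert (0 < INR (fact n)) by apply INR_fact_pos. assert (0 < 2 ^ i) by (apply pow_lt; lra).
    assert (Eleft : sum_n_m (fun m => (-1) ^ m * inner_sum n i (p m)) 1 h
                    = -1 * sum_n_m (fun m => (-1) ^ (m + 1) * inner_sum n i (t m)) 1 h).
    { rewrite <- (sum_n_m_mult_l (K := R_Ring)). apply sum_n_m_ext_loc. intros m Hm.
      unfold p. destruct (le_dec m h); [|lia]. unfold_R_ops. rewrite pow_add. simpl. ring. }
    assert (Emid : (-1) ^ S h * inner_sum n i (p (S h))
                   = - (-1) ^ h * INR (fact (n - 1 - i)) / 2 ^ i * hermite_fun (n - 1 - i) 0).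
    { unfold p. destruct (le_dec (S h) h), (Nat.eq_dec (S h) (S h)); try lia.
      rewrite inner_sum_at_0 by exact Hi1. simpl. field. lra. }
    assert (Eright : sum_n_m (fun m => (-1) ^ S m * inner_sum n i (p (S m))) (S h) n
                     = -1 * sum_n_m (fun m => (-1) ^ m * inner_sum n i (t m)) (S h) n).
    { rewrite <- (sum_n_m_mult_l (K := R_Ring)). apply sum_n_m_ext_loc. intros m Hm.
      unfold p. destruct (le_dec (S m) h), (Nat.eq_dec (S m) (S h)); try lia.
      unfold_R_ops. simpl. ring. }
    rewrite (sum_n_m_Chasles _ 1 h (S n)), (sum_Sn_m _ (S h) (S n)), <- sum_n_m_S, Nat.add_1_r by lia.
    unfold_R_ops. rewrite Eleft, Emid, Eright. field. lra.
Qed.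

End Moments.

Theorem theorem3p3 (n i : nat) (t : nat -> R)
  (Hn : (1 <= n)%nat) (Hi : (i <= n - 1)%nat)
  (Hinc : forall m : nat, (1 <= m)%nat -> (m < n)%nat -> t m < t (S m))
  (Hzeros : forall x : R, hermite n x = 0 <->
              exists m : nat, (1 <= m <= n)%nat /\ x = t m) :
  (Nat.Even i ->
     is_integral_R (fun x => x ^ i / INR (fact i) * Rabs (hermite_fun n x))
       (/ INR (fact n) *
        sum_n_m (fun m => (-1) ^ (m + n) * inner_sum n i (t m)) 1 n))
  /\
  (Nat.Odd i -> Nat.Even n ->
     is_integral_R (fun x => Rabs x ^ i / INR (fact i) * Rabs (hermite_fun n x))
       (/ INR (fact n) *
          sum_n_m (fun m => (-1) ^ (m + 1) * inner_sum n i (t m)) 1 (n / 2)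
        + (-1) ^ (n / 2) * INR (fact (n - 1 - i)) / (INR (fact n) * 2 ^ i)
          * hermite_fun (n - 1 - i) 0
        + / INR (fact n) *
          sum_n_m (fun m => (-1) ^ m * inner_sum n i (t m)) (n / 2 + 1) n))
  /\
  (Nat.Odd i -> Nat.Odd n ->
     is_integral_R (fun x => Rabs x ^ i / INR (fact i) * Rabs (hermite_fun n x))
       (/ INR (fact n) *
          sum_n_m (fun m => (-1) ^ m * inner_sum n i (t m)) 1 ((n - 1) / 2)
        + / INR (fact n) *
          sum_n_m (fun m => (-1) ^ (m + 1) * inner_sum n i (t m)) ((n + 3) / 2) n)).
Proof.
  assert (Hin : (i < n)%nat) by lia.
  assert (Hzeros_poly : forall x, hermite_poly n x = 0 <-> exists m, (1 <= m <= n)%nat /\ x = t m)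
    by (intro x; rewrite <- hermite_eq_poly; apply Hzeros).
  split; [|split].
  - exact (moment_even_case n i t Hn Hin Hinc Hzeros_poly).
  - exact (moment_odd_even_case n i t Hn Hin Hinc Hzeros_poly).
  - exact (moment_odd_odd_case n i t Hn Hin Hinc Hzeros_poly).
Qed.
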